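(* Let $R$ be a commutative ring in which $2$ is invertible, $I$ an ideal of $R$, and let $(Q,q)$ be a free quadratic space of rank $n=2r$, $r\ge1$, having an ordered basis $e_1,\dots,e_n$ with respect to which the matrix of $\langle\,,\,\rangle$ is $\widetilde{\psi}_r$. Let $M=Q\perp\mathbb{H}(R)$ and identify automorphisms of $M$ with matrices in $\mathrm{GL}_{n+2}(R)$ via the ordered basis $(e_1,\dots,e_n,x,f)$ (with respect to which the form has matrix $\widetilde{\psi}_{r+1}$). Then $\mathrm{EO}_{(R,I)}(Q,\mathbb{H}(R))=\mathrm{EO}_{n+2}(R,I)$.
   Context: A quadratic $R$-module $(Q,q)$ is a finitely generated projective module with quadratic form $q$ and bilinear form $\langle x,y\rangle=q(x+y)-q(x)-q(y)$ (so $\langle x,x\rangle=2q(x)$); a quadratic space if $z\mapsto\langle z,-\rangle$ is an isomorphism $Q\to Q^*$. $\mathbb{H}(R)=R x\oplus Rf$ with $q(ax+bf)=ab$, so $\langle x,f\rangle=1$, $\langle x,x\rangle=\langle f,f\rangle=0$; orthogonal sums carry the sum of forms. $e_{i,j}$ denotes the matrix unit; $\widetilde{\psi}_s=\sum_{i=1}^s(e_{2i-1,2i}+e_{2i,2i-1})$ ($2s\times 2s$). DSER transformations on $Q\perp\mathbb{H}(P)$ ($P$ f.g. projective, $\mathbb{H}(P)=P\oplus P^*$ with $q(y,g)=g(y)$): for $\alpha:Q\to P$ let $\alpha^*:P^*\to Q$ satisfy $\langle\alpha^*(g),z\rangle=g(\alpha(z))$ and $E_\alpha(z,y,g)=(z-\alpha^*(g),y+\alpha(z)-\tfrac12\alpha\alpha^*(g),g)$;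 for $\beta:Q\to P^*$ let $\beta^*:P\to Q$ satisfy $\langle\beta^*(y),z\rangle=\beta(z)(y)$ and $E^*_\beta(z,y,g)=(z-\beta^*(y),y,g+\beta(z)-\tfrac12\beta\beta^*(y))$. $\mathrm{EO}_R(Q,\mathbb{H}(P))$ is generated by all $E_\alpha,E^*_\beta$; $\mathrm{EO}_I(Q,\mathbb{H}(P))$ is generated by those with $\alpha(Q)\subseteq IP$, $\beta(Q)\subseteq IP^*$; $\mathrm{EO}_{(R,I)}(Q,\mathbb{H}(P))$ is the normal closure of $\mathrm{EO}_I(Q,\mathbb{H}(P))$ in $\mathrm{EO}_R(Q,\mathbb{H}(P))$. Even elementary orthogonal group: for $N=2s$, let $\sigma$ be the permutation of $\{1,\dots,N\}$ with $\sigma(2i)=2i-1$, $\sigma(2i-1)=2i$; for $i\neq j$, $i\ne\sigma(j)$ and $z\in R$, $oe_{i,j}(z)=I_N+ze_{i,j}-ze_{\sigma(j),\sigma(i)}$ (orthogonal for $\widetilde{\psi}_s$). $\mathrm{EO}_N(R)$ is generated by all $oe_{i,j}(z)$, $z\in R$; $\mathrm{EO}_N(I)$ by those with $z\in I$; $\mathrm{EO}_N(R,I)$ is the normal closure of $\mathrm{EO}_N(I)$ in $\mathrm{EO}_N(R)$. *)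

From HB Require Import structures.
From mathcomp Require Import all_boot all_order all_algebra.
Set Implicit Arguments. Unset Strict Implicit. Unset Printing Implicit Defensive.
Import Order.TTheory GRing.Theory.
Local Open Scope ring_scope.

(* Conventions: indices are 0-based.  The hyperbolic pairs are (0,1),(2,3),...
   so the permutation sigma of the paper (2i <-> 2i-1, 1-based) becomes
   k <-> sigma k below. *)
Definition sigma (k : nat) : nat := if odd k then k.-1 else k.+1.

Definition psi_mx (R : nzRingType) (m : nat) : 'M[R]_m :=
  \matrix_(i < m, j < m) ((j : nat) == sigma i)%:R.

Definition is_ideal (R : comNzRingType) (I : {pred R}) : Prop :=
  [/\ 0 \in I, (forall x y, x \in I -> y \in I -> x + y \in I)
    & (forall a x, x \in I -> a * x \in I)].

Inductive gen_grp (T : unitRingType) (S : T -> Prop) : T -> Prop :=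
| gen_one : gen_grp S 1
| gen_in x : S x -> gen_grp S x
| gen_inv x : gen_grp S x -> gen_grp S x^-1
| gen_mul x y : gen_grp S x -> gen_grp S y -> gen_grp S (x * y).

Definition normal_closure (T : unitRingType) (G H : T -> Prop) : T -> Prop :=
  gen_grp (fun x => exists g h, [/\ G g, H h & x = g * h * g^-1]).

Section Setting.
Variables (R : comUnitRingType) (n : nat).
(* Q = R^n (column coordinates w.r.t. e_1..e_n), bilinear form matrix psi_mx n;
   M = Q _|_ H(R) has coordinates (z, y, g) w.r.t. (e_1..e_n, x, f),
   i.e. vectors in 'cV_(n.+2): entries 0..n-1 = z, entry n = y, entry n+1 = g. *)

Definition getc m (v : 'cV[R]_m) (k : nat) : R :=
  if (insub k : option 'I_m) is Some i then v i 0 else 0.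

Definition zpart (v : 'cV[R]_(n.+2)) : 'cV[R]_n := \col_(i < n) getc v i.
Definition ypart (v : 'cV[R]_(n.+2)) : R := getc v n.
Definition gpart (v : 'cV[R]_(n.+2)) : R := getc v n.+1.
Definition mkvec (z : 'cV[R]_n) (y g : R) : 'cV[R]_(n.+2) :=
  \col_(i < n.+2) (if ((i : nat) < n)%N then getc z i else if (i : nat) == n then y else g).

Definition half : R := (2%:R)^-1.

(* alpha : Q -> P = R given by a row vector a; its adjoint alpha^* : P^* = R -> Q
   (characterized by <alpha^*(g), z> = g alpha(z)) is g |-> g * psi a^T. *)
Definition lin (a : 'rV[R]_n) (z : 'cV[R]_n) : R := (a *m z) 0 0.
Definition adj (a : 'rV[R]_n) (g : R) : 'cV[R]_n := g *: (psi_mx R n *m a^T).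

Definition E_alpha (a : 'rV[R]_n) (v : 'cV[R]_(n.+2)) : 'cV[R]_(n.+2) :=
  let z := zpart v in let y := ypart v in let g := gpart v in
  mkvec (z - adj a g) (y + lin a z - half * lin a (adj a g)) g.

Definition E_beta (b : 'rV[R]_n) (v : 'cV[R]_(n.+2)) : 'cV[R]_(n.+2) :=
  let z := zpart v in let y := ypart v in let g := gpart v in
  mkvec (z - adj b y) y (g + lin b z - half * lin b (adj b y)).

Definition fun_mx (F : 'cV[R]_(n.+2) -> 'cV[R]_(n.+2)) : 'M[R]_(n.+2) :=
  \matrix_(i, j) F (delta_mx j 0) i 0.

Definition DSER_gen (J : {pred R}) (A : 'M[R]_(n.+2)) : Prop :=
  (exists2 a : 'rV[R]_n, (forall j, a 0 j \in J) & A = fun_mx (E_alpha a)) \/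
  (exists2 b : 'rV[R]_n, (forall j, b 0 j \in J) & A = fun_mx (E_beta b)).

Definition EO_QH (J : {pred R}) : 'M[R]_(n.+2) -> Prop := gen_grp (DSER_gen J).
Definition EO_QH_rel (I : {pred R}) : 'M[R]_(n.+2) -> Prop :=
  normal_closure (EO_QH predT) (EO_QH I).

Definition oe (i j : 'I_(n.+2)) (z : R) : 'M[R]_(n.+2) :=
  \matrix_(k, l) (((k == l)%:R : R) + ((k == i) && (l == j))%:R * z
                  - (((k : nat) == sigma j) && ((l : nat) == sigma i))%:R * z).

Definition oe_gen (J : {pred R}) (A : 'M[R]_(n.+2)) : Prop :=
  exists i j : 'I_(n.+2), exists z, [/\ i != j, (i : nat) != sigma j, z \in J & A = oe i j z].

Definition EO_N (J : {pred R}) : 'M[R]_(n.+2) -> Prop := gen_grp (oe_gen J).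
Definition EO_N_rel (I : {pred R}) : 'M[R]_(n.+2) -> Prop :=
  normal_closure (EO_N predT) (EO_N I).
End Setting.

From Pilot Require Import Defs.
From mathcomp Require Import all_boot all_order all_algebra.
From mathcomp Require Import ring zify.
Set Implicit Arguments. Unset Strict Implicit. Unset Printing Implicit Defensive.
Import GRing.Theory.
Local Open Scope ring_scope.

(* Over the basis (e_1, ..., e_n, x, f), the DSER transformation E_alpha with
   alpha = sum_j a_j e_j^* is the product of the elementary matrices
   oe_{x,e_j}(a_j) (this is where 1/2 is needed: E_alpha E_alpha' = E_(alpha + alpha')),
   and likewise E*_beta is the product of the oe_{f,e_j}(b_j).  Up to the symmetry
   oe_{i,j}(z) = oe_{sigma j, sigma i}(-z), these are all the oe_{i,j}(z) with i or j
   in {x, f}.  Every other generator is a commutator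
   oe_{i,j}(z) = [oe_{i,x}(z), oe_{x,j}(1)], so EO_N(R) = EO_R(Q, H(R)), and for
   z in I it is the product of oe_{i,x}(z) in EO_I(Q, H(R)) with a conjugate of
   oe_{i,x}(-z) by oe_{x,j}(1) in EO_R(Q, H(R)). *)

Section GeneratedSubgroups.
Variable T : unitRingType.
Implicit Types (g h x : T).

Lemma gen_grp_min (S S' : T -> Prop) :
  (forall x, S x -> gen_grp S' x) -> forall x, gen_grp S x -> gen_grp S' x.
Proof.
move=> sSS' x; elim=> [|y /sSS' //|y _|y z _ IHy _ IHz].
- exact: gen_one.
- exact: gen_inv.
- exact: gen_mul.
Qed.

Lemma gen_grp_unit (S : T -> Prop) :
  (forall x, S x -> x \is a GRing.unit) -> forall x, gen_grp S x -> x \is a GRing.unit.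
Proof.
move=> uS x; elim=> [|y /uS //|y _|y z _ uy _ uz].
- exact: unitr1.
- by rewrite unitrV.
- by rewrite unitrMl.
Qed.

Lemma normal_closureS (G G' H H' : T -> Prop) :
  (forall g, G g -> G' g) -> (forall h, H h -> H' h) ->
  forall x, normal_closure G H x -> normal_closure G' H' x.
Proof.
move=> sGG' sHH'; apply: gen_grp_min => _ [g [h [Gg Hh ->]]].
by apply: gen_in; exists g, h; split; [apply: sGG' | apply: sHH' |].
Qed.

Lemma normal_closure_sub (G H : T -> Prop) h : G 1 -> H h -> normal_closure G H h.
Proof.
by move=> G1 Hh; apply: gen_in; exists 1, h; rewrite mul1r invr1 mulr1.
Qed.

Section Conjugation.
Variables G H : T -> Prop.
Hypothesis mulG : forall g g', G g -> G g' -> G (g * g').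
Hypothesis unitG : forall g, G g -> g \is a GRing.unit.
Hypothesis unitH : forall h, H h -> h \is a GRing.unit.

Lemma normal_closure_unit x : normal_closure G H x -> x \is a GRing.unit.
Proof.
apply: gen_grp_unit => _ [g [h [/unitG ug /unitH uh ->]]].
by rewrite !unitrMl ?unitrV.
Qed.

Lemma normal_closureJ g x :
  G g -> normal_closure G H x -> normal_closure G H (g * x * g^-1).
Proof.
move=> Gg Nx; have ug := unitG Gg.
elim: Nx => [|_ [g' [h [Gg' Hh ->]]]|y Ny IHy|y z _ IHy _ IHz].
- by rewrite mulr1 mulrV //; exact: gen_one.
- apply: gen_in; exists (g * g'), h; split; [exact: mulG | by [] |].
  by rewrite invrM ?unitG // !mulrA.
- have uy := normal_closure_unit Ny.
  have -> : g * y^-1 * g^-1 = (g * y * g^-1)^-1.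
    by rewrite !invrM ?unitrV ?unitrMl // invrK mulrA.
  exact: gen_inv.
- have -> : g * (y * z) * g^-1 = (g * y * g^-1) * (g * z * g^-1).
    by rewrite !mulrA mulrVK.
  exact: gen_mul.
Qed.

End Conjugation.
End GeneratedSubgroups.

Lemma is_ideal_predT (R : comNzRingType) : is_ideal (predT : {pred R}).
Proof. by []. Qed.

Lemma idealN (R : comNzRingType) (I : {pred R}) x : is_ideal I -> x \in I -> - x \in I.
Proof. by case=> _ _ IM Ix; rewrite -mulN1r IM. Qed.

Lemma sigmaK : involutive sigma.
Proof. by rewrite /sigma => -[|k] //=; case ok: (odd k); rewrite /= ?ok. Qed.

Lemma sigma_neq k : (sigma k == k) = false.
Proof.
by rewrite /sigma; case: ifP => [|_]; [case: k => [|k] //= _; rewrite ltn_eqF | rewrite gtn_eqF].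
Qed.

Lemma sigma_inj : injective sigma. Proof. exact: inv_inj sigmaK. Qed.

Lemma eq_sigma i j : (i == sigma j) = (sigma i == j).
Proof. by rewrite -(inj_eq sigma_inj) sigmaK. Qed.

Lemma sigma_even k : ~~ odd k -> sigma k = k.+1.
Proof. by rewrite /sigma => /negbTE ->. Qed.

Lemma sigma_evenS k : ~~ odd k -> sigma k.+1 = k.
Proof. by rewrite /sigma /= => ->. Qed.

Lemma sigma_ltn m k : ~~ odd m -> (k < m)%N -> (sigma k < m)%N.
Proof.
rewrite /sigma => om km; case ok: (odd k); first by case: k km ok => // k /ltnW.
rewrite ltn_neqAle km andbT; apply: contraNneq om => <-.
by rewrite /= ok.
Qed.

Section Coordinates.
Variables (R : comUnitRingType) (n : nat).
Implicit Types (a b : 'rV[R]_n) (z : 'cV[R]_n) (u v : 'cV[R]_(n.+2)) (c y g : R).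

Lemma getc_ord m (v : 'cV[R]_m) (i : 'I_m) : getc v i = v i 0.
Proof. by rewrite /getc; case: insubP => [j _ /val_inj -> //|]; rewrite ltn_ord. Qed.

Lemma getc_ge m (v : 'cV[R]_m) k : (m <= k)%N -> getc v k = 0.
Proof. by rewrite /getc; case: insubP => // j _ <-; rewrite leqNgt ltn_ord. Qed.

Lemma getcL m c (u v : 'cV[R]_m) k : getc (c *: u + v) k = c * getc u k + getc v k.
Proof. by rewrite /getc; case: insubP => [j _ _|_]; rewrite ?mxE ?mulr0 ?addr0. Qed.

Lemma zpartL c u v : zpart (c *: u + v) = c *: zpart u + zpart v.
Proof. by apply/matrixP => i j; rewrite !mxE getcL. Qed.

Lemma ypartL c u v : ypart (c *: u + v) = c * ypart u + ypart v.
Proof. exact: getcL. Qed.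

Lemma gpartL c u v : gpart (c *: u + v) = c * gpart u + gpart v.
Proof. exact: getcL. Qed.

Lemma mkvecL c z y g z' y' g' :
  mkvec (c *: z + z') (c * y + y') (c * g + g') = c *: mkvec z y g + mkvec z' y' g'.
Proof. by apply/matrixP => i j; rewrite !mxE; case: ifP => _; [rewrite getcL | case: ifP]. Qed.

Lemma zpart_mkvec z y g : zpart (mkvec z y g) = z.
Proof.
apply/matrixP => i j; rewrite mxE (ord1 j).
by rewrite -[i : nat]/(widen_ord (leqW (leqW (leqnn n))) i : nat) getc_ord mxE /= ltn_ord getc_ord.
Qed.

Lemma ypart_mkvec z y g : ypart (mkvec z y g) = y.
Proof. by rewrite /ypart -[n]/(Ordinal (leqW (leqnn n.+1)) : nat) getc_ord mxE /= ltnn eqxx. Qed.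

Lemma gpart_mkvec z y g : gpart (mkvec z y g) = g.
Proof.
rewrite /gpart -[n.+1]/(Ordinal (leqnn n.+2) : nat) getc_ord mxE /=.
by rewrite ltnNge leqnSn gtn_eqF.
Qed.

Lemma mkvec_parts v : mkvec (zpart v) (ypart v) (gpart v) = v.
Proof.
apply/matrixP => k j; rewrite (ord1 j) mxE; case: ifP => [kn|kn0].
  by rewrite -[k : nat]/(Ordinal kn : nat) getc_ord mxE /= getc_ord.
case: ifP => [/eqP kn|kn]; first by rewrite /ypart -getc_ord kn.
have kE : (k : nat) = n.+1 by move: (ltn_ord k) (negbT kn) (negbT kn0); lia.
by rewrite /gpart -getc_ord kE.
Qed.

Lemma linL a c z z' : lin a (c *: z + z') = c * lin a z + lin a z'.
Proof. by rewrite /lin mulmxDr -scalemxAr !mxE. Qed.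

Lemma linDr a z z' : lin a (z + z') = lin a z + lin a z'.
Proof. by rewrite /lin mulmxDr !mxE. Qed.

Lemma linBr a z z' : lin a (z - z') = lin a z - lin a z'.
Proof. by rewrite /lin mulmxBr !mxE. Qed.

Lemma linDl a b z : lin (a + b) z = lin a z + lin b z.
Proof. by rewrite /lin mulmxDl !mxE. Qed.

Lemma lin0l z : lin 0 z = 0.
Proof. by rewrite /lin mul0mx mxE. Qed.

Lemma adjL a c g g' : adj a (c * g + g') = c *: adj a g + adj a g'.
Proof. by rewrite /adj scalerDl scalerA. Qed.

Lemma adjDl a b g : adj (a + b) g = adj a g + adj b g.
Proof. by rewrite /adj linearD /= mulmxDr scalerDr. Qed.

Lemma adj0l g : adj (0 : 'rV[R]_n) g = 0.
Proof. by rewrite /adj trmx0 mulmx0 scaler0. Qed.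

Lemma trmx_psi : (psi_mx R n)^T = psi_mx R n.
Proof. by apply/matrixP => i j; rewrite !mxE eq_sigma eq_sym. Qed.

Lemma lin_adjC a b g : lin a (adj b g) = lin b (adj a g).
Proof.
rewrite /lin /adj -!scalemxAr [in LHS]mxE [in RHS]mxE.
suff -> : a *m (psi_mx R n *m b^T) = (b *m (psi_mx R n *m a^T))^T by rewrite mxE.
by rewrite !trmx_mul trmxK trmx_psi mulmxA.
Qed.

Lemma getc_delta m (l : 'I_m) (k : nat) : getc (delta_mx l 0 : 'cV[R]_m) k = (k == l)%:R.
Proof.
case: (ltnP k m) => [km|mk]; first by rewrite -[k]/(Ordinal km : nat) getc_ord mxE andbT.
by rewrite getc_ge // gtn_eqF // (leq_trans (ltn_ord l) mk).
Qed.

Lemma lin_e (j : 'I_n) c (z : 'cV[R]_n) : lin (c *: 'e_j) z = c * z j 0.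
Proof. by rewrite /lin -scalemxAl -rowE !mxE. Qed.

Lemma adj_e (j : 'I_n) c g (i : 'I_n) :
  adj (c *: 'e_j) g i 0 = g * c * ((j : nat) == sigma i)%:R.
Proof. by rewrite /adj linearZ /= trmx_delta -scalemxAr -colE !mxE mulrA. Qed.

End Coordinates.

Section MatrixOfMap.
Variables (R : comUnitRingType) (n : nat).
Implicit Types F G : 'cV[R]_(n.+2) -> 'cV[R]_(n.+2).

Lemma mul_fun_mx F : linear F -> forall v, fun_mx F *m v = F v.
Proof.
move=> linF v.
have F0 : F 0 = 0 by have := linF (-1) 0 0; rewrite scaler0 addr0 scaleN1r addNr.
have FD : {morph F : x y / x + y} by move=> x y; rewrite -[x]scale1r linF !scale1r.
have FZ c u : F (c *: u) = c *: F u by rewrite -[c *: u]addr0 linF F0 addr0.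
rewrite [in RHS](matrix_sum_delta v) (big_morph F FD F0).
apply/matrixP => i j; rewrite (ord1 j) !mxE summxE; apply: eq_bigr => k _.
by rewrite big_ord1 FZ !mxE mulrC.
Qed.

Lemma fun_mx_comp F G : linear F -> fun_mx (F \o G) = fun_mx F *m fun_mx G.
Proof.
move=> linF; apply/matrixP => i j.
by rewrite [LHS]mxE /= -mul_fun_mx // !mxE; apply: eq_bigr => k _; rewrite !mxE.
Qed.

Lemma eq_fun_mx F G : F =1 G -> fun_mx F = fun_mx G.
Proof. by move=> eqFG; apply/matrixP => i j; rewrite !mxE eqFG. Qed.

Lemma fun_mx_id : fun_mx (@id 'cV[R]_(n.+2)) = 1.
Proof. by apply/matrixP => i j; rewrite !mxE andbT. Qed.

End MatrixOfMap.

Section DSER.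
Variables (R : comUnitRingType) (n : nat).
Hypothesis unit2 : (2%:R : R) \is a GRing.unit.
Implicit Types (a b : 'rV[R]_n) (v : 'cV[R]_(n.+2)).

Lemma E_alpha_linear a : linear (E_alpha a).
Proof.
move=> c u v; rewrite /E_alpha zpartL ypartL gpartL -mkvecL adjL !linL.
by congr mkvec; [rewrite scalerBr opprD addrACA | ring].
Qed.

Lemma E_beta_linear b : linear (E_beta b).
Proof.
move=> c u v; rewrite /E_beta zpartL ypartL gpartL -mkvecL adjL !linL.
by congr mkvec; [rewrite scalerBr opprD addrACA | ring].
Qed.

(* The cross terms [lin a (adj b g)] and [lin b (adj a g)] agree by symmetry of
   the form, and [half] absorbs their sum. *)
Lemma E_alpha_comp a b v : E_alpha a (E_alpha b v) = E_alpha (a + b) v.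
Proof.
rewrite /E_alpha zpart_mkvec ypart_mkvec gpart_mkvec adjDl !linDl !linBr !linDr.
congr mkvec; first by rewrite opprD addrA addrAC.
rewrite [lin b (adj a _)]lin_adjC -[lin a (adj b _) in LHS]mul1r -(mulVr unit2) -/(Defs.half R).
ring.
Qed.

Lemma E_beta_comp a b v : E_beta a (E_beta b v) = E_beta (a + b) v.
Proof.
rewrite /E_beta zpart_mkvec ypart_mkvec gpart_mkvec adjDl !linDl !linBr !linDr.
congr mkvec; first by rewrite opprD addrA addrAC.
rewrite [lin b (adj a _)]lin_adjC -[lin a (adj b _) in LHS]mul1r -(mulVr unit2) -/(Defs.half R).
ring.
Qed.

Lemma E_alpha0 v : E_alpha 0 v = v.
Proof. by rewrite /E_alpha adj0l !lin0l subr0 addr0 mulr0 subr0 mkvec_parts. Qed.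

Lemma E_beta0 v : E_beta 0 v = v.
Proof. by rewrite /E_beta adj0l !lin0l subr0 addr0 mulr0 subr0 mkvec_parts. Qed.

Lemma fun_mx_E_alphaD a b :
  fun_mx (E_alpha (a + b)) = fun_mx (E_alpha a) * fun_mx (E_alpha b).
Proof.
rewrite -mulmxE -fun_mx_comp; last exact: E_alpha_linear.
by apply: eq_fun_mx => v; rewrite /= E_alpha_comp.
Qed.

Lemma fun_mx_E_betaD a b :
  fun_mx (E_beta (a + b)) = fun_mx (E_beta a) * fun_mx (E_beta b).
Proof.
rewrite -mulmxE -fun_mx_comp; last exact: E_beta_linear.
by apply: eq_fun_mx => v; rewrite /= E_beta_comp.
Qed.

Lemma fun_mx_E_alpha0 : fun_mx (E_alpha (0 : 'rV[R]_n)) = 1.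
Proof. by rewrite -fun_mx_id; apply: eq_fun_mx => v; rewrite E_alpha0. Qed.

Lemma fun_mx_E_beta0 : fun_mx (E_beta (0 : 'rV[R]_n)) = 1.
Proof. by rewrite -fun_mx_id; apply: eq_fun_mx => v; rewrite E_beta0. Qed.

End DSER.

Lemma commutator_unipotent (T : pzRingType) (Y Z : T) :
  Y * Y = 0 -> Z * Z = 0 -> Y * Z * Y = 0 -> Z * Y * Z = 0 ->
  (1 + Y) * (1 + Z) * (1 - Y) * (1 - Z) = 1 + (Y * Z - Z * Y).
Proof.
move=> YY ZZ YZY ZYZ.
have -> : (1 + Y) * (1 + Z) * (1 - Y) = 1 + Z + (Y * Z - Z * Y).
  rewrite !(mulrDl, mulrDr, mulrBl, mulrBr, mul1r, mulr1, mulrN) ?mulrA ?YY ?YZY.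
  rewrite !addr0 -addrA; congr (_ + _).
  by rewrite opprD addrACA subrr add0r.
rewrite !(mulrDl, mulrDr, mulrBl, mulrBr, mul1r, mulr1, mulrN) ?mulrA ?ZZ ?ZYZ.
by rewrite mulNr ZYZ -(mulrA Y) ZZ mulr0 !oppr0 !addr0 subrK.
Qed.

Section ElementaryOrthogonal.
Variables (R : comUnitRingType) (n : nat).
Hypothesis n_even : ~~ odd n.
Local Notation N := n.+2.
Local Notation D := (@delta_mx R N N).
Implicit Types (i j k l p q : 'I_N) (z a b c : R).

Let N_even : ~~ odd N. Proof. by rewrite /= negbK. Qed.

Definition sigma_ord (k : 'I_N) : 'I_N := Ordinal (sigma_ltn N_even (ltn_ord k)).
Definition idx_e (j : 'I_n) : 'I_N := widen_ord (leqW (leqnSn n)) j.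
Definition idx_x : 'I_N := Ordinal (leqnSn n.+1).
Definition idx_f : 'I_N := sigma_ord idx_x.

Lemma sigma_ordK : involutive sigma_ord.
Proof. by move=> k; apply/val_inj; rewrite /= sigmaK. Qed.

Lemma sigma_ord_neq k : (sigma_ord k == k) = false.
Proof. exact: sigma_neq. Qed.

Lemma neq_sigma_ord k : (k == sigma_ord k) = false.
Proof. by rewrite eq_sym sigma_ord_neq. Qed.

Lemma eq_sigma_ord i j : (i == sigma_ord j) = (sigma_ord i == j).
Proof. exact: eq_sigma. Qed.

Lemma eq_sigma_ord2 i j : (sigma_ord i == sigma_ord j) = (i == j).
Proof. by rewrite (inj_eq (inv_inj sigma_ordK)). Qed.

Definition odelta (i j : 'I_N) : 'M[R]_N := D i j - D (sigma_ord j) (sigma_ord i).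

Lemma oeE i j z : oe i j z = 1 + z *: odelta i j.
Proof. by apply/matrixP => k l; rewrite !mxE; ring. Qed.

Lemma oe_sym i j z : oe i j z = oe (sigma_ord j) (sigma_ord i) (- z).
Proof. by apply/matrixP => k l; rewrite !mxE /= !sigmaK; ring. Qed.

Lemma odelta_mul i k l j :
  odelta i k * odelta l j =
  D i j *+ (k == l) - D i (sigma_ord l) *+ (k == sigma_ord j)
  - D (sigma_ord k) j *+ (sigma_ord i == l)
  + D (sigma_ord k) (sigma_ord l) *+ (sigma_ord i == sigma_ord j).
Proof.
by rewrite -mulmxE !(mulmxBl, mulmxBr) !mul_delta_mx_cond opprD opprK addrA.
Qed.

Lemma delta_odelta_mul p q l j :
  D p q * odelta l j = D p j *+ (q == l) - D p (sigma_ord l) *+ (q == sigma_ord j).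
Proof. by rewrite -mulmxE mulmxBr !mul_delta_mx_cond. Qed.

Lemma oe_mulN i j z : i != j -> oe i j z * oe i j (- z) = 1.
Proof.
move=> /negbTE neq_ij; rewrite !oeE mulrDl !mulrDr !mul1r mulr1 -scalerAl -scalerAr.
rewrite odelta_mul eq_sigma_ord2 (eq_sym j) neq_ij sigma_ord_neq neq_sigma_ord.
by rewrite !mulr0n !subr0 addr0 !scaler0 addr0 scaleNr subrK.
Qed.

Lemma oe_unit i j z : i != j -> oe i j z \is a GRing.unit.
Proof.
move=> neq_ij; apply/unitrP; exists (oe i j (- z)).
by rewrite oe_mulN // -{2}[z]opprK oe_mulN.
Qed.

Lemma oeV i j z : i != j -> (oe i j z)^-1 = oe i j (- z).
Proof.
by move=> neq_ij; rewrite -[LHS]mulr1 -(oe_mulN z neq_ij) mulKr ?oe_unit.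
Qed.

Lemma oe_commutator i j k a b :
  i != j -> k != i -> k != j -> k != sigma_ord i -> k != sigma_ord j ->
  oe i j (a * b) = oe i k a * oe k j b * oe i k (- a) * oe k j (- b).
Proof.
move=> /negbTE ij /negbTE ki /negbTE kj /negbTE ksi /negbTE ksj.
have isk : (i == sigma_ord k) = false by rewrite eq_sigma_ord eq_sym.
have jsk : (j == sigma_ord k) = false by rewrite eq_sigma_ord eq_sym.
have ji : (j == i) = false by rewrite eq_sym.
have ik : (i == k) = false by rewrite eq_sym.
have jk : (j == k) = false by rewrite eq_sym.
have mulZZ c d (A B : 'M[R]_N) : (c *: A) * (d *: B) = (c * d) *: (A * B).
  by rewrite -scalerAl -scalerAr scalerA.
have simp := (eq_sigma_ord2, ij, ji, ki, ik, kj, jk, ksi, isk, ksj, jsk, eqxx, neq_sigma_ord).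
rewrite !oeE !scaleNr; set Y := a *: odelta i k; set Z := b *: odelta k j.
have YZ : Y * Z = (a * b) *: D i j.
  by rewrite mulZZ odelta_mul eq_sigma_ord2 -!eq_sigma_ord !simp /= mulr1n !subr0 addr0.
have ZY : Z * Y = (a * b) *: D (sigma_ord j) (sigma_ord i).
  by rewrite mulZZ odelta_mul eq_sigma_ord2 -!eq_sigma_ord !simp /= mulr1n !subr0 add0r mulrC.
rewrite commutator_unipotent ?YZ ?ZY -?scalerBr //.
- by rewrite mulZZ odelta_mul eq_sigma_ord2 -!eq_sigma_ord !simp /= !subr0 addr0 scaler0.
- by rewrite mulZZ odelta_mul eq_sigma_ord2 -!eq_sigma_ord !simp /= !subr0 addr0 scaler0.
- by rewrite /Y -scalerAl -scalerAr delta_odelta_mul !simp /= subr0 !scaler0.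
- rewrite /Z -scalerAl -scalerAr delta_odelta_mul eq_sigma_ord2 -!eq_sigma_ord.
  by rewrite !simp /= subr0 !scaler0.
Qed.

Lemma fun_mx_E_alpha_e (j : 'I_n) c : fun_mx (E_alpha (c *: 'e_j)) = oe idx_x (idx_e j) c.
Proof.
apply/matrixP => k l; rewrite !mxE /E_alpha /ypart /gpart !lin_e !getc_delta /= (sigma_even n_even).
rewrite -!val_eqE /= [(n.+1 == l)%N]eq_sym.
have sj_lt_n : (sigma j < n)%N := sigma_ltn n_even (ltn_ord j).
case: (ltnP k n) => k_lt_n.
  rewrite -[k : nat]/(Ordinal k_lt_n : nat) getc_ord mxE.
  rewrite [(- adj _ _) _ _]mxE adj_e mxE getc_delta /=.
  rewrite (ltn_eqF k_lt_n) eq_sigma (eq_sym (sigma j)).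
  by case: (_ == sigma j)%N; case: (l == n.+1 :> nat);
    rewrite /= ?mul0r ?mulr0 ?mul1r ?mulr1 ?addr0.
case: eqP => [k_n|/eqP k_neq_n].
  rewrite adj_e mxE getc_delta k_n (gtn_eqF sj_lt_n) (eq_sym (j : nat) (sigma j)) sigma_neq.
  by rewrite !mulr0 subr0 (eq_sym (j : nat)) mulrC /= mul0r subr0.
have -> : (k : nat) = n.+1 by move: (ltn_ord k) k_neq_n k_lt_n; lia.
by rewrite (gtn_eqF (ltn_trans sj_lt_n (ltnSn n))) /= mul0r subr0 addr0 eq_sym.
Qed.

Lemma fun_mx_E_beta_e (j : 'I_n) c : fun_mx (E_beta (c *: 'e_j)) = oe idx_f (idx_e j) c.
Proof.
apply/matrixP => k l; rewrite !mxE /E_beta /ypart /gpart !lin_e !getc_delta /=.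
rewrite -!val_eqE /= sigmaK (sigma_even n_even) [(n == l)%N]eq_sym.
have sj_lt_n : (sigma j < n)%N := sigma_ltn n_even (ltn_ord j).
case: (ltnP k n) => k_lt_n.
  rewrite -[k : nat]/(Ordinal k_lt_n : nat) getc_ord mxE.
  rewrite [(- adj _ _) _ _]mxE adj_e mxE getc_delta /=.
  rewrite (ltn_eqF (leqW k_lt_n)) eq_sigma (eq_sym (sigma j)).
  by case: (_ == sigma j)%N; case: (l == n :> nat); rewrite /= ?mul0r ?mulr0 ?mul1r ?mulr1 ?addr0.
case: eqP => [k_n|/eqP k_neq_n].
  by rewrite k_n (ltn_eqF (ltnSn n)) (gtn_eqF sj_lt_n) /= mul0r !subr0 addr0 eq_sym.
have -> : (k : nat) = n.+1 by move: (ltn_ord k) k_neq_n k_lt_n; lia.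
rewrite adj_e mxE getc_delta (eq_sym (j : nat) (sigma j)) sigma_neq eqxx.
rewrite (gtn_eqF (ltn_trans sj_lt_n (ltnSn n))) (eq_sym (j : nat)) /=.
by rewrite !mulr0 subr0 mul0r subr0 mulrC.
Qed.

End ElementaryOrthogonal.

Section ElementarySubgroups.
Variables (R : comUnitRingType) (n : nat).
Hypothesis n_even : ~~ odd n.
Hypothesis unit2 : (2%:R : R) \is a GRing.unit.
Local Notation N := n.+2.
Local Notation idx_x := (idx_x n).
Local Notation idx_f := (idx_f n_even).
Local Notation idx_e := (@idx_e n).
Implicit Types (J : {pred R}) (A : 'M[R]_N) (i j : 'I_N) (z : R).

Lemma fun_mx_E_alpha_prod (a : 'rV[R]_n) :
  fun_mx (E_alpha a) = \prod_(j < n) oe idx_x (idx_e j) (a 0 j).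
Proof.
rewrite {1}[a]row_sum_delta (big_morph _ (fun_mx_E_alphaD unit2) (fun_mx_E_alpha0 _ _)).
by apply: eq_bigr => j _; rewrite fun_mx_E_alpha_e.
Qed.

Lemma fun_mx_E_beta_prod (b : 'rV[R]_n) :
  fun_mx (E_beta b) = \prod_(j < n) oe idx_f (idx_e j) (b 0 j).
Proof.
rewrite {1}[b]row_sum_delta (big_morph _ (fun_mx_E_betaD unit2) (fun_mx_E_beta0 _ _)).
by apply: eq_bigr => j _; rewrite fun_mx_E_beta_e.
Qed.

Lemma oe_gen_unit J A : oe_gen J A -> A \is a GRing.unit.
Proof. by case=> i [j [z [ij _ _ ->]]]; apply: oe_unit. Qed.

Lemma EO_QH_sub_EO_N J A : EO_QH J A -> EO_N J A.
Proof.
have oe_e_gen i (j : 'I_n) z : (n <= i)%N -> z \in J -> EO_N J (oe i (idx_e j) z).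
  move=> n_le_i Jz; have sj_lt_n := sigma_ltn n_even (ltn_ord j).
  apply: gen_in; exists i, (idx_e j), z; split=> //; move: (ltn_ord j); rewrite -?val_eqE /=; lia.
apply: gen_grp_min => _ [[a Ja ->] | [b Jb ->]].
- rewrite fun_mx_E_alpha_prod; apply: big_ind => [|x y|j _]; [exact: gen_one | exact: gen_mul |].
  exact: oe_e_gen.
- rewrite fun_mx_E_beta_prod; apply: big_ind => [|x y|j _]; [exact: gen_one | exact: gen_mul |].
  by apply: oe_e_gen; rewrite //= (sigma_even n_even).
Qed.

Lemma EO_QH_unit J A : EO_QH J A -> A \is a GRing.unit.
Proof. by move/EO_QH_sub_EO_N; apply: gen_grp_unit; apply: oe_gen_unit. Qed.

Lemma interior_partner i j : (n <= i)%N -> i != j -> (i : nat) != sigma j -> (j < n)%N.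
Proof.
move=> n_le_i; rewrite -val_eqE /= => ij isj; rewrite ltnNge; apply/negP => n_le_j.
have [i_lt j_lt] := (ltn_ord i, ltn_ord j).
have [jE | jE] : (j : nat) = n \/ (j : nat) = n.+1 by lia.
  by move: isj; rewrite jE sigma_even //; lia.
by move: isj; rewrite jE sigma_evenS //; lia.
Qed.

Section IdealEntries.
Variable J : {pred R}.
Hypothesis J_ideal : is_ideal J.

Lemma oe_e_in_EO_QH i (j : 'I_n) z : z \in J -> (n <= i)%N -> EO_QH J (oe i (idx_e j) z).
Proof.
move=> Jz n_le_i; have [_ _ JM] := J_ideal.
have Jze k : (z *: 'e_j) 0 k \in J by rewrite !mxE eqxx /= mulrC JM.
have [iE | iE] : (i : nat) = n \/ (i : nat) = n.+1 by move: (ltn_ord i); lia.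
  have -> : i = idx_x by apply: val_inj.
  by apply: gen_in; left; exists (z *: 'e_j); rewrite ?fun_mx_E_alpha_e.
have -> : i = idx_f by apply: val_inj; rewrite /= sigma_even.
by apply: gen_in; right; exists (z *: 'e_j); rewrite ?fun_mx_E_beta_e.
Qed.

Lemma oe_boundary_in_EO_QH i j z :
  z \in J -> i != j -> (i : nat) != sigma j -> (n <= i)%N || (n <= j)%N -> EO_QH J (oe i j z).
Proof.
move=> Jz ij isj /orP[n_le_i | n_le_j].
  have j_lt_n := interior_partner n_le_i ij isj.
  have -> : j = idx_e (Ordinal j_lt_n) by apply: val_inj.
  exact: oe_e_in_EO_QH.
have ji : j != i by rewrite eq_sym.
have jsi : (j : nat) != sigma i by rewrite eq_sigma eq_sym.
have si_lt_n := sigma_ltn n_even (interior_partner n_le_j ji jsi).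
rewrite oe_sym; have -> : sigma_ord n_even i = idx_e (Ordinal si_lt_n) by apply: val_inj.
apply: oe_e_in_EO_QH => /=; first exact: idealN.
by rewrite leqNgt; apply: contraL n_le_j => /(sigma_ltn n_even); rewrite sigmaK -ltnNge.
Qed.

Lemma oe_to_x_in_EO_QH i z : (i < n)%N -> z \in J -> EO_QH J (oe i idx_x z).
Proof.
move=> i_lt_n Jz; apply: oe_boundary_in_EO_QH; rewrite -?val_eqE //= ?sigma_even ?leqnn ?orbT //.
all: lia.
Qed.

Lemma oe_from_x_in_EO_QH j z : (j < n)%N -> z \in J -> EO_QH J (oe idx_x j z).
Proof.
move=> j_lt_n Jz; have sj_lt_n := sigma_ltn n_even j_lt_n.
by apply: oe_boundary_in_EO_QH; rewrite -?val_eqE //= ?leqnn //; lia.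
Qed.

End IdealEntries.

Lemma oe_interior_commutator i j (a b : R) : (i < n)%N -> (j < n)%N -> i != j ->
  oe i j (a * b) = oe i idx_x a * oe idx_x j b * oe i idx_x (- a) * oe idx_x j (- b).
Proof.
move=> i_lt_n j_lt_n ij; have := (sigma_ltn n_even i_lt_n, sigma_ltn n_even j_lt_n).
by case=> si_lt_n sj_lt_n; apply: oe_commutator; rewrite // -val_eqE /=; lia.
Qed.

Lemma EO_N_sub_EO_QH A : EO_N predT A -> EO_QH predT A.
Proof.
apply: gen_grp_min => _ [i [j [z [ij isj _ ->]]]].
have [|/norP[]] := boolP ((n <= i) || (n <= j))%N.
  exact: (oe_boundary_in_EO_QH (is_ideal_predT R)).
rewrite -!ltnNge => i_lt_n j_lt_n.
rewrite -[z]mulr1 oe_interior_commutator //.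
by repeat apply: gen_mul;
  first [apply: (oe_to_x_in_EO_QH (is_ideal_predT R))
        | apply: (oe_from_x_in_EO_QH (is_ideal_predT R))].
Qed.

Lemma EO_N_sub_EO_QH_rel I A : is_ideal I -> EO_N I A -> EO_QH_rel I A.
Proof.
move=> I_ideal; apply: gen_grp_min => _ [i [j [z [ij isj Iz ->]]]].
have [boundary|/norP[]] := boolP ((n <= i) || (n <= j))%N.
  by apply: normal_closure_sub; [exact: gen_one | exact: oe_boundary_in_EO_QH].
rewrite -!ltnNge => i_lt_n j_lt_n.
rewrite -[z]mulr1 oe_interior_commutator // -!mulrA; apply: gen_mul.
  by apply: normal_closure_sub; [exact: gen_one | exact: oe_to_x_in_EO_QH].
apply: gen_in; exists (oe idx_x j 1), (oe i idx_x (- z)); split.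
- exact: (oe_from_x_in_EO_QH (is_ideal_predT R)).
- by apply: oe_to_x_in_EO_QH => //; apply: idealN.
- by rewrite oeV ?mulrA // -val_eqE /= gtn_eqF.
Qed.

Lemma EO_QH_rel_sub_EO_N_rel I A : EO_QH_rel I A -> EO_N_rel I A.
Proof. by apply: normal_closureS => B; apply: EO_QH_sub_EO_N. Qed.

Lemma EO_N_rel_sub_EO_QH_rel I A : is_ideal I -> EO_N_rel I A -> EO_QH_rel I A.
Proof.
move=> I_ideal; apply: gen_grp_min => _ [g [h [Gg Hh ->]]].
apply: normal_closureJ; last exact: EO_N_sub_EO_QH_rel.
- by move=> ? ?; apply: gen_mul.
- exact: EO_QH_unit.
- exact: EO_QH_unit.
- exact: EO_N_sub_EO_QH.
Qed.

End ElementarySubgroups.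

Theorem mainTheorem3 (R : comUnitRingType) (r : nat) (hr : (0 < r)%N)
  (h2 : (2%:R : R) \is a GRing.unit) (I : {pred R}) (hI : is_ideal I) :
  forall A : 'M[R]_((r.*2).+2), EO_QH_rel I A <-> EO_N_rel I A.
Proof.
have r2_even : ~~ odd r.*2 by rewrite odd_double.
move=> A; split; first exact: EO_QH_rel_sub_EO_N_rel.
exact: EO_N_rel_sub_EO_QH_rel.
Qed.
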